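(* Let $a,b\in\mathbb C$ with $m:=a-b\in\mathbb Z_{\ge0}$, and let $\chi_{a,b}$ be the character $z\mapsto z^a\bar z^b$ of $\mathrm{GL}_1(\mathbb C)$. Then $\Gamma_{1,m}(\chi_{a,b})\cong\mathrm{St}([b+\tfrac12,\,a-\tfrac12])$ as $\mathbb H_m$-modules (for $m=0$ this is the one-dimensional module of $\mathbb H_0=\mathbb C$).
   Context: $G=\mathrm{GL}_n(\mathbb C)$ with $K=U(n)$; the complexified Lie algebra of $\mathfrak g_0=\mathfrak{gl}_n(\mathbb C)$ is identified with $\mathfrak g_0\oplus\mathfrak g_0$ via $(E,E')\mapsto\frac12(E-j\,iE)+\frac12(\overline{E}+j\,i\overline{E})$ ($j$ the complexification's imaginary unit, $i=\sqrt{-1}I_n$). $\mathbb H_m$ is the graded Hecke algebra of type $A$: generated by $y_1,\dots,y_m,s_1,\dots,s_{m-1}$ with relations $y_ay_b=y_by_a$, $s_a^2=1$, $s_as_b=s_bs_a$ ($|a-b|>1$), $s_as_{a+1}s_a=s_{a+1}s_as_{a+1}$, $s_ay_a-y_{a+1}s_a=1$, $s_ay_b=y_bs_a$ ($b\ne a,a+1$). Products $\pi_1\times\pi_2=\mathbb H_{m_1+m_2}\otimes_{\mathbb H_{m_1}\otimes\mathbb H_{m_2}}(\pi_1\boxtimes\pi_2)$ with the embedding $y_a\otimes1\mapsto y_a$, $1\otimes y_b\mapsto y_{m_1+b}$, $s_a\otimes1\mapsto s_a$, $1\otimes s_b\mapsto s_{m_1+b}$. For $c\in\mathbb C$, $\psi_c$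 is the character of $\mathbb H_1=\mathbb C[y_1]$ with $y_1\mapsto c$. A segment $[a,b]$ ($b-a\in\mathbb Z_{\ge0}$) is the set $\{a,a+1,\dots,b\}$; $[a,a-1]=\emptyset$. $\mathrm{St}([a,b])$ is the unique simple quotient of $\psi_a\times\psi_{a+1}\times\cdots\times\psi_b$; it is one-dimensional and restricts to the sign representation of the symmetric group. Functor. $V=\mathbb C^n$ with $g$ acting by $\overline g$; $(0,E)$ acts on $V$ by $E$ and $(E,0)$ by $0$. $\Omega_{kl}=\sum_{a,b}1^{\otimes k}\otimes E_{ab}\otimes1^{\otimes(l-k-1)}\otimes E_{ba}\otimes1^{\otimes(m-l)}$ ($E_{ab}$ matrix units) acts on $X\otimes V^{\otimes m}$ with $E$ in slot $0$ acting on $X$ by $(0,E)$ and in slot $k\ge1$ on the $k$-th $V$ by $(0,E)$. $\Gamma_{n,m}(X)=\mathrm{Hom}_K(\mathrm{triv},X\otimes V^{\otimes m})$ with $s_a\mapsto-\Omega_{a,a+1}$, $y_l\mapsto\sum_{0\le x<l}\Omega_{xl}+\frac n2$. *)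

From HB Require Import structures.
From mathcomp Require Import all_boot all_order all_algebra.
From mathcomp Require Import reals complex.
Set Implicit Arguments. Unset Strict Implicit. Unset Printing Implicit Defensive.
Import Order.TTheory GRing.Theory Num.Theory.
Local Open Scope ring_scope.

Section Defs.
Variable R : realType.
Local Notation C := R[i].

Definition iC : C := Complex 0 1.

(* g_0 = gl_1(C) = C (a real Lie algebra).  Differential of the character
   chi_{a,b}(z) = z^a \bar z^b :  E |-> a E + b \bar E  (R-linear). *)
Definition dchi (a b : C) (E : C) : C := a * E + b * E^*.

(* Complex-linear extension of an R-linear action rho of g_0 on a complex
   space (the complexification's unit j acts as multiplication by iC),
   composed with the identification
   (E,E') |-> 1/2 (E - j iE) + 1/2 (\bar E' + j i \bar E'). *)
Definition cplx_act (rho : C -> C) (E E' : C) : C :=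
  (rho E - iC * rho (iC * E)) / 2 + (rho E'^* + iC * rho (iC * E'^*)) / 2.

Definition actX (a b : C) (E E' : C) : C := cplx_act (dchi a b) E E'.

Definition actV (E E' : C) : C := E'.

(* action of (0,E) in slot k of X (x) V^{(x) m} (slot 0 = X) *)
Definition slot_act (a b : C) (k : nat) (E : C) : C :=
  if k == 0%N then actX a b 0 E else actV 0 E.

(* Omega_{kl} = sum_{p,q} E_pq (slot k) E_qp (slot l); for n = 1 the only
   matrix unit is E_11 = 1.  X (x) V^{(x) m} is one-dimensional (= 'cV_1) and
   Omega_{kl} acts by the scalar matrix below. *)
Definition Omega (a b : C) (k l : nat) : 'M[C]_1 :=
  (slot_act a b k 1 * slot_act a b l 1)%:M.

(* Gamma_{1,m}: y_l (l = 1..m, encoded as l' : 'I_m with l = l'+1)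
   |-> sum_{0 <= x < l} Omega_{x l} + n/2 with n = 1 *)
Definition GammaY (a b : C) (m : nat) (l : 'I_m) : 'M[C]_1 :=
  \sum_(x < l.+1) Omega a b x l.+1 + (1 / 2 : C)%:M.

(* s_p (p = 1..m-1, encoded as p' : 'I_(m.-1)) |-> - Omega_{p,p+1} *)
Definition GammaS (a b : C) (m : nat) (p : 'I_(m.-1)) : 'M[C]_1 :=
  - Omega a b p.+1 p.+2.

(* K = U(1) acts on X (x) V^{(x) m} by chi_{a,b}(k) * \bar k^m; on the unit
   circle chi_{a,b}(k) = k^a \bar k^b = k^(a-b) (a-b an integer d).
   Hom_K(triv, X (x) V^{(x) m}) is identified with the K-fixed vectors. *)
Definition GammaInv (a b : C) (m : nat) (v : 'cV[C]_1) : Prop :=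
  forall k : C, `|k| = 1 -> forall d : int, a - b = d%:~R ->
    (k ^ d * (k^*) ^+ m) *: v = v.

(* St([c, c + m - 1]) as an H_m-module on 'cV_1: one-dimensional, the
   symmetric group acts by the sign, and y_l acts by c + (l - 1). *)
Definition StY (c : C) (m : nat) (l : 'I_m) : 'M[C]_1 := (c + l%:R)%:M.
Definition StS (m : nat) (p : 'I_(m.-1)) : 'M[C]_1 := (-1 : C)%:M.

(* H_m-modules are given by matrices for the generators y_l and s_p acting on
   column vectors.  [Hiso_sub Ys Ss W Yg Sg] : the H_m-module ('cV_d, Ys, Ss)
   is isomorphic to the H_m-stable subspace W of ('cV_D, Yg, Sg), i.e. there is
   an injective linear map f with image exactly W, intertwining generators. *)
Definition Hiso_sub (m d D : nat)
    (Ys : 'I_m -> 'M[C]_d) (Ss : 'I_(m.-1) -> 'M[C]_d)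
    (W : 'cV[C]_D -> Prop)
    (Yg : 'I_m -> 'M[C]_D) (Sg : 'I_(m.-1) -> 'M[C]_D) : Prop :=
  exists f : 'M[C]_(D, d),
    [/\ \rank f = d,
        (forall v, W v <-> exists u, v = f *m u),
        (forall l, f *m Ys l = Yg l *m f) &
        (forall p, f *m Ss p = Sg p *m f)].

End Defs.
Arguments StY {R} c m l.
Arguments StS {R} m p.
Arguments GammaY {R} a b m l.
Arguments GammaS {R} a b m p.
Arguments GammaInv {R} a b m v.

From HB Require Import structures.
From mathcomp Require Import all_boot all_order all_algebra.
From mathcomp Require Import reals complex.
From mathcomp Require Import ring.
Import GRing.Theory Num.Theory.
Local Open Scope ring_scope.

(* For n = 1 the space X (x) V^(x)m is a line.  K = U(1) acts on it by
   k^(a-b) \bar k^m = |k|^(2m) = 1, so the whole line is K-invariant.  The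
   element (0,1) acts on X by the antiholomorphic exponent b and on V by 1, so
   Omega_{0l} = b and Omega_{kl} = 1 for k >= 1; hence y_l acts by
   b + (l - 1) + 1/2 and s_p by -1, the defining scalars of
   St([b + 1/2, a - 1/2]). *)

Lemma Hiso_sub_id (R : realType) (m d : nat) (Ys : 'I_m -> 'M[R[i]]_d)
    (Ss : 'I_m.-1 -> 'M_d) (W : 'cV_d -> Prop) Yg Sg :
  (forall v, W v) -> Ys =1 Yg -> Ss =1 Sg -> Hiso_sub Ys Ss W Yg Sg.
Proof.
move=> Wall eqY eqS; exists 1%:M; split=> [|v|l|p].
- exact: mxrank1.
- by split=> [_|_]; [exists v; rewrite mul1mx | apply: Wall].
- by rewrite mul1mx mulmx1 eqY.
- by rewrite mul1mx mulmx1 eqS.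
Qed.

Section GammaOneDim.
Variable R : realType.
Implicit Types (a b : R[i]) (m : nat).

Lemma conj_iC : (iC R)^* = - iC R.
Proof. by apply/eqP; rewrite eq_complex /= oppr0 !eqxx. Qed.

Lemma mul_iC_iC : iC R * iC R = -1.
Proof. by apply/eqP; rewrite eq_complex /= !mulr0 !mulr1 addr0 add0r oppr0 !eqxx. Qed.

Lemma slot_act0 a b : slot_act a b 0 1 = b.
Proof.
rewrite /slot_act /= /actX /cplx_act /dchi !mulr0 !(conjC0, conjC1) !mulr1.
rewrite conj_iC.
have two_neq0 : (2 : R[i]) != 0 by rewrite pnatr_eq0.
by field: mul_iC_iC.
Qed.

Lemma slot_actS a b k : slot_act a b k.+1 1 = 1.
Proof. by []. Qed.

Lemma Omega0S a b l : Omega a b 0 l.+1 = b%:M.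
Proof. by rewrite /Omega slot_act0 slot_actS mulr1. Qed.

Lemma OmegaSS a b k l : Omega a b k.+1 l.+1 = 1%:M.
Proof. by rewrite /Omega !slot_actS mulr1. Qed.

Lemma GammaY_St a b m : GammaY a b m =1 StY (b + 1 / 2) m.
Proof.
move=> l; rewrite /GammaY /StY big_ord_recl Omega0S.
under eq_bigr => k _ do rewrite OmegaSS.
rewrite sumr_const card_ord -(raddfMn (@scalar_mx _ 1)) -!raddfD /=.
by congr (_%:M); rewrite addrAC.
Qed.

Lemma GammaS_St a b m : GammaS a b m =1 StS m.
Proof. by move=> p; rewrite /GammaS /StS OmegaSS raddfN. Qed.

Lemma GammaInv_all a b m v : a - b = m%:R -> GammaInv a b m v.
Proof.
move=> hm k k1 d hd.
have -> : d = m by apply/eqP; rewrite -(eqr_int R[i]) -hd hm -pmulrn.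
by rewrite -exprMn -normCK k1 !expr1n scale1r.
Qed.

End GammaOneDim.

Theorem lemma6p2 (R : realType) (a b : R[i]) (m : nat)
    (hm : a - b = m%:R) :
  Hiso_sub (StY (b + 1 / 2) m) (StS m)
           (GammaInv a b m) (GammaY a b m) (GammaS a b m).
Proof.
apply: Hiso_sub_id.
- by move=> v; apply: GammaInv_all.
- by move=> l; rewrite GammaY_St.
- by move=> p; rewrite GammaS_St.
Qed.
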